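(* Let $G$ be a cubical $\omega$-category with connections, $m\le n$, and $1\le i\le m-1$. Then, as operators on $G_n$, $\Phi_m\psi_i=\Phi_m$.
   Context: A cubical $\omega$-category with connections $G$ consists of sets $G_n$ ($n\ge0$), face maps $\partial^\alpha_i:G_n\to G_{n-1}$, degeneracies $\varepsilon_i:G_{n-1}\to G_n$, connections $\Gamma^\alpha_i:G_n\to G_{n+1}$ ($1\le i\le n$, $\alpha=\pm$) and partial compositions $\circ_j$ on $G_n$ ($1\le j\le n$, $a\circ_jb$ defined iff $\partial^+_ja=\partial^-_jb$) satisfying: $\partial^\alpha_i\partial^\beta_j=\partial^\beta_{j-1}\partial^\alpha_i$ ($i<j$), $\varepsilon_i\varepsilon_j=\varepsilon_{j+1}\varepsilon_i$ ($i\le j$), $\partial^\alpha_i\varepsilon_j=\varepsilon_{j-1}\partial^\alpha_i$ ($i<j$), $\varepsilon_j\partial^\alpha_{i-1}$ ($i>j$), $\mathrm{id}$ ($i=j$); $\Gamma^\alpha_i\Gamma^\beta_j=\Gamma^\beta_{j+1}\Gamma^\alpha_i$ ($i<j$), $\Gamma^\alpha_i\Gamma^\alpha_i=\Gamma^\alpha_{i+1}\Gamma^\alpha_i$, $\Gamma^\alpha_i\varepsilon_j=\varepsilon_{j+1}\Gamma^\alpha_i$ ($i<j$), $\varepsilon_j\Gamma^\alpha_{i-1}$ ($i>j$), $\Gamma^\alpha_j\varepsilon_j=\varepsilon_{j+1}\varepsilon_j$, $\partial^\alpha_i\Gamma^\beta_j=\Gamma^\beta_{j-1}\partial^\alpha_i$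 ($i<j$), $\Gamma^\beta_j\partial^\alpha_{i-1}$ ($i>j+1$), $\partial^\alpha_j\Gamma^\alpha_j=\partial^\alpha_{j+1}\Gamma^\alpha_j=\mathrm{id}$, $\partial^\alpha_j\Gamma^{-\alpha}_j=\partial^\alpha_{j+1}\Gamma^{-\alpha}_j=\varepsilon_j\partial^\alpha_j$; $\partial^-_j(a\circ_jb)=\partial^-_ja$, $\partial^+_j(a\circ_jb)=\partial^+_jb$, $\partial^\alpha_i(a\circ_jb)=\partial^\alpha_ia\circ_{j-1}\partial^\alpha_ib$ ($i<j$), $\partial^\alpha_ia\circ_j\partial^\alpha_ib$ ($i>j$); interchange for $i\ne j$; $\varepsilon_i(a\circ_jb)=\varepsilon_ia\circ_{j+1}\varepsilon_ib$ ($i\le j$), $\varepsilon_ia\circ_j\varepsilon_ib$ ($i>j$); $\Gamma^\alpha_i(a\circ_jb)=\Gamma^\alpha_ia\circ_{j+1}\Gamma^\alpha_ib$ ($i<j$), $\Gamma^\alpha_ia\circ_j\Gamma^\alpha_ib$ ($i>j$); $\Gamma^+_j(a\circ_jb)=(\Gamma^+_ja\circ_j\varepsilon_ja)\circ_{j+1}(\varepsilon_{j+1}a\circ_j\Gamma^+_jb)$, $\Gamma^-_j(a\circ_jb)=(\Gamma^-_ja\circ_j\varepsilon_{j+1}b)\circ_{j+1}(\varepsilon_jb\circ_j\Gamma^-_jb)$; each $\circ_j$ is a category structure with identities $\varepsilon_jy$; $\Gamma^+_ix\circ_i\Gamma^-_ix=\varepsilon_{i+1}x$, $\Gamma^+_ix\circ_{i+1}\Gamma^-_ix=\varepsilon_ix$.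 Folding operations on $G_n$: $\psi_ix=\Gamma^+_i\partial^-_{i+1}x\circ_{i+1}x\circ_{i+1}\Gamma^-_i\partial^+_{i+1}x$ ($1\le i\le n-1$), $\Psi_r=\psi_{r-1}\psi_{r-2}\cdots\psi_1$ ($1\le r\le n$), $\Phi_m=\Psi_1\Psi_2\cdots\Psi_m=\psi_1(\psi_2\psi_1)\cdots(\psi_{m-1}\cdots\psi_1)$ ($0\le m\le n$). *)

From mathcomp Require Import all_boot.
Set Implicit Arguments. Unset Strict Implicit. Unset Printing Implicit Defensive.

(* Cubical omega-category with connections.
   - cell n        = G_n
   - face n i a    = d^a_i : G_(n+1) -> G_n      (1 <= i <= n+1); a = true is '+', false is '-'
   - degen n i     = eps_i : G_n -> G_(n+1)      (1 <= i <= n+1)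
   - conn n i a    = Gamma^a_i : G_n -> G_(n+1)  (1 <= i <= n)
   - comp n j x y  = x o_j y on G_n              (1 <= j <= n)
   Composition is a partial operation; it is represented by a total function
   whose values are only constrained (by the axioms) on composable pairs,
   i.e. when  d^+_j x = d^-_j y. *)
Record CubCat := {
  cell : nat -> Type;
  face : forall n : nat, nat -> bool -> cell n.+1 -> cell n;
  degen : forall n : nat, nat -> cell n -> cell n.+1;
  conn : forall n : nat, nat -> bool -> cell n -> cell n.+1;
  comp : forall n : nat, nat -> cell n -> cell n -> cell n;

  face_face : forall n i j a b (x : cell n.+2), 1 <= i -> i < j -> j <= n.+2 ->
    face i a (face j b x) = face j.-1 b (face i a x);
  degen_degen : forall n i j (x : cell n), 1 <= i -> i <= j -> j <= n.+1 ->
    degen i (degen j x) = degen j.+1 (degen i x);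
  face_degen_lt : forall n i j a (x : cell n.+1), 1 <= i -> i < j -> j <= n.+2 ->
    face i a (degen j x) = degen j.-1 (face i a x);
  face_degen_gt : forall n i j a (x : cell n.+1), 1 <= j -> j < i -> i <= n.+2 ->
    face i a (degen j x) = degen j (face i.-1 a x);
  face_degen_eq : forall n i a (x : cell n), 1 <= i -> i <= n.+1 ->
    face i a (degen i x) = x;

  conn_conn_lt : forall n i j a b (x : cell n), 1 <= i -> i < j -> j <= n ->
    conn i a (conn j b x) = conn j.+1 b (conn i a x);
  conn_conn_eq : forall n i a (x : cell n), 1 <= i -> i <= n ->
    conn i a (conn i a x) = conn i.+1 a (conn i a x);
  conn_degen_lt : forall n i j a (x : cell n), 1 <= i -> i < j -> j <= n.+1 ->
    conn i a (degen j x) = degen j.+1 (conn i a x);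
  conn_degen_gt : forall n i j a (x : cell n), 1 <= j -> j < i -> i <= n.+1 ->
    conn i a (degen j x) = degen j (conn i.-1 a x);
  conn_degen_eq : forall n j a (x : cell n), 1 <= j -> j <= n.+1 ->
    conn j a (degen j x) = degen j.+1 (degen j x);
  face_conn_lt : forall n i j a b (x : cell n.+1), 1 <= i -> i < j -> j <= n.+1 ->
    face i a (conn j b x) = conn j.-1 b (face i a x);
  face_conn_gt : forall n i j a b (x : cell n.+1), 1 <= j -> j.+1 < i -> i <= n.+2 ->
    face i a (conn j b x) = conn j b (face i.-1 a x);
  face_conn_same1 : forall n j a (x : cell n), 1 <= j -> j <= n ->
    face j a (conn j a x) = x;
  face_conn_same2 : forall n j a (x : cell n), 1 <= j -> j <= n ->
    face j.+1 a (conn j a x) = x;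
  face_conn_opp1 : forall n j a (x : cell n.+1), 1 <= j -> j <= n.+1 ->
    face j a (conn j (~~ a) x) = degen j (face j a x);
  face_conn_opp2 : forall n j a (x : cell n.+1), 1 <= j -> j <= n.+1 ->
    face j.+1 a (conn j (~~ a) x) = degen j (face j a x);

  face_comp_minus : forall n j (x y : cell n.+1), 1 <= j -> j <= n.+1 ->
    face j true x = face j false y -> face j false (comp j x y) = face j false x;
  face_comp_plus : forall n j (x y : cell n.+1), 1 <= j -> j <= n.+1 ->
    face j true x = face j false y -> face j true (comp j x y) = face j true y;
  face_comp_lt : forall n i j a (x y : cell n.+1), 1 <= i -> i < j -> j <= n.+1 ->
    face j true x = face j false y ->
    face i a (comp j x y) = comp j.-1 (face i a x) (face i a y);
  face_comp_gt : forall n i j a (x y : cell n.+1), 1 <= j -> j < i -> i <= n.+1 ->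
    face j true x = face j false y ->
    face i a (comp j x y) = comp j (face i a x) (face i a y);

  interchange : forall n i j (x y z w : cell n.+1),
    1 <= i -> i <= n.+1 -> 1 <= j -> j <= n.+1 -> i != j ->
    face i true x = face i false y -> face i true z = face i false w ->
    face j true x = face j false z -> face j true y = face j false w ->
    comp j (comp i x y) (comp i z w) = comp i (comp j x z) (comp j y w);

  degen_comp_le : forall n i j (x y : cell n.+1), 1 <= i -> i <= j -> j <= n.+1 ->
    face j true x = face j false y ->
    degen i (comp j x y) = comp j.+1 (degen i x) (degen i y);
  degen_comp_gt : forall n i j (x y : cell n.+1), 1 <= j -> j < i -> i <= n.+2 ->
    face j true x = face j false y ->
    degen i (comp j x y) = comp j (degen i x) (degen i y);

  conn_comp_lt : forall n i j a (x y : cell n.+1), 1 <= i -> i < j -> j <= n.+1 ->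
    face j true x = face j false y ->
    conn i a (comp j x y) = comp j.+1 (conn i a x) (conn i a y);
  conn_comp_gt : forall n i j a (x y : cell n.+1), 1 <= j -> j < i -> i <= n.+1 ->
    face j true x = face j false y ->
    conn i a (comp j x y) = comp j (conn i a x) (conn i a y);
  conn_comp_plus : forall n j (x y : cell n.+1), 1 <= j -> j <= n.+1 ->
    face j true x = face j false y ->
    conn j true (comp j x y) =
      comp j.+1 (comp j (conn j true x) (degen j x))
                (comp j (degen j.+1 x) (conn j true y));
  conn_comp_minus : forall n j (x y : cell n.+1), 1 <= j -> j <= n.+1 ->
    face j true x = face j false y ->
    conn j false (comp j x y) =
      comp j.+1 (comp j (conn j false x) (degen j.+1 y))
                (comp j (degen j y) (conn j false y));

  comp_assoc : forall n j (x y z : cell n.+1), 1 <= j -> j <= n.+1 ->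
    face j true x = face j false y -> face j true y = face j false z ->
    comp j (comp j x y) z = comp j x (comp j y z);
  comp_id_l : forall n j (x : cell n.+1), 1 <= j -> j <= n.+1 ->
    comp j (degen j (face j false x)) x = x;
  comp_id_r : forall n j (x : cell n.+1), 1 <= j -> j <= n.+1 ->
    comp j x (degen j (face j true x)) = x;

  conn_cancel1 : forall n i (x : cell n), 1 <= i -> i <= n ->
    comp i (conn i true x) (conn i false x) = degen i.+1 x;
  conn_cancel2 : forall n i (x : cell n), 1 <= i -> i <= n ->
    comp i.+1 (conn i true x) (conn i false x) = degen i x
}.

Arguments face {_ n}.
Arguments degen {_ n}.
Arguments conn {_ n}.
Arguments comp {_ n}.

(* psi_i x = Gamma^+_i d^-_(i+1) x  o_(i+1)  x  o_(i+1)  Gamma^-_i d^+_(i+1) x,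
   on G_n (n >= 1; on G_0 there is no psi, we put the identity). *)
Definition psi (G : CubCat) (n : nat) : nat -> cell G n -> cell G n :=
  match n return nat -> cell G n -> cell G n with
  | 0 => fun _ x => x
  | k.+1 => fun i x =>
      comp i.+1 (comp i.+1 (conn i true (face i.+1 false x)) x)
                (conn i false (face i.+1 true x))
  end.

(* Psi_r = psi_(r-1) ... psi_1  (Psi_1 = id; Psi_0 := id by convention, unused). *)
Fixpoint Psi (G : CubCat) (n : nat) (r : nat) (x : cell G n) : cell G n :=
  match r with
  | 0 => x
  | r'.+1 => match r' with
             | 0 => x
             | _ => psi r' (Psi r' x)
             end
  end.

Fixpoint Phi (G : CubCat) (n : nat) (m : nat) (x : cell G n) : cell G n :=
  match m with
  | 0 => x
  | m'.+1 => Phi m' (Psi m'.+1 x)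
  end.

From mathcomp Require Import all_boot zify.

Set Implicit Arguments. Unset Strict Implicit. Unset Printing Implicit Defensive.

(** The folding operations on [G_n] satisfy three relations: [psi_j psi_j = psi_j],
  [psi_i psi_j = psi_j psi_i] for [|i - j| >= 2], and
  [psi_j psi_(j+1) psi_j psi_(j+1) = psi_j psi_(j+1) psi_j]. The last one holds because
  [psi_j psi_(j+1) psi_j x] is [psi_j psi_(j+1) x] composed in direction [j+2] with two
  degenerate cells built from faces of [x] that [psi_(j+1)] does not change.
  The theorem follows from these relations alone, by induction on [m]: split
  [Psi_(m+1) = (psi_m ... psi_(i+1)) (psi_i ... psi_1)]; for [i = 1] the extra [psi_1] is
  absorbed by idempotence, and for [i > 1] it becomes [psi_i psi_(i-1) psi_i], in front of
  which the induction hypothesis lets us insert [psi_(i-1)] and then remove the last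
  [psi_i] by the third relation. *)

Section OperatorChains.

Variables (T : Type) (N : nat) (f : nat -> T -> T).

Fixpoint chain a k x := if k is k'.+1 then f (a + k').+1 (chain a k' x) else x.

Fixpoint chains m x := if m is m'.+1 then chains m' (chain 0 m' x) else x.

Lemma chain_add a k l x : chain a (k + l) x = chain (a + k) l (chain a k x).
Proof. by elim: l => [|l IH] /=; rewrite ?addn0 // addnS /= IH addnA. Qed.

Hypothesis f_idem : forall j x, 1 <= j < N -> f j (f j x) = f j x.
Hypothesis f_comm : forall i j x, 1 <= i -> i.+1 < j < N -> f j (f i x) = f i (f j x).
Hypothesis f_absorb : forall j x, 1 <= j -> j.+1 < N ->
  f j (f j.+1 (f j (f j.+1 x))) = f j (f j.+1 (f j x)).

Lemma chain_f_comm a k j x : j < a \/ a + k.+1 < j -> 1 <= j < N -> a + k < N ->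
  chain a k (f j x) = f j (chain a k x).
Proof.
move=> far hj; elim: k far => [|k IH] far hk //=.
rewrite IH; [|lia|lia].
by case: far => far; [rewrite f_comm | rewrite -f_comm] => //; lia.
Qed.

Lemma chains_f m i x : m <= N -> 1 <= i < m -> chains m (f i x) = chains m x.
Proof.
elim: m i x => [|m IH] i x hm hi /=; first lia.
have split_at_i y : chain 0 m y = chain i (m - i) (chain 0 i y).
  by move: (chain_add 0 i (m - i) y); rewrite add0n subnKC //; lia.
rewrite !split_at_i {split_at_i}; case: i hi => [|[|i]] hi /=; first lia.
  by rewrite f_idem //; lia.
rewrite !add0n (chain_f_comm (a := 0)); [|lia|lia|lia].
rewrite -[LHS](IH i.+1); [|lia..].
rewrite -(chain_f_comm (a := i.+2)); [|lia..].
rewrite f_absorb; [|lia..].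
rewrite (chain_f_comm (a := i.+2)); [|lia..].
by rewrite IH //; lia.
Qed.

End OperatorChains.

Section CubicalFolding.

Variable G : CubCat.

Lemma psiE n i (x : cell G n.+1) :
  psi i x = comp i.+1 (comp i.+1 (conn i true (face i.+1 false x)) x)
                      (conn i false (face i.+1 true x)).
Proof. by []. Qed.

Lemma psi_composable n i (x : cell G n.+1) : 1 <= i -> i <= n ->
  face i.+1 true (conn i true (face i.+1 false x)) = face i.+1 false x /\
  face i.+1 true (comp i.+1 (conn i true (face i.+1 false x)) x) =
    face i.+1 false (conn i false (face i.+1 true x)).
Proof.
move=> i_gt0 i_le; have c1 := face_conn_same2 true (face i.+1 false x) i_gt0 i_le.
by rewrite face_comp_plus ?face_conn_same2 //; lia.
Qed.

Lemma face_psiS n j a (x : cell G n.+2) : 1 <= j -> j <= n.+1 ->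
  face j.+1 a (psi j x) = degen j (face j a (face j.+1 a x)).
Proof.
move=> j_gt0 j_le; have [c1 c2] := psi_composable x j_gt0 j_le.
rewrite psiE; case: a.
- by rewrite face_comp_plus ?(face_conn_opp2 true) //; lia.
- by rewrite !face_comp_minus ?(face_conn_opp2 false) //; lia.
Qed.

Lemma face_psi_gt n j k a (x : cell G n.+2) : 1 <= j -> j.+1 < k -> k <= n.+2 ->
  face k a (psi j x) = psi j (face k a x).
Proof.
move=> j_gt0 jk k_le; have [c1 c2] := psi_composable x j_gt0 (ltnW (leq_trans jk k_le)).
rewrite !psiE face_comp_gt ?c2 //; try lia.
rewrite face_comp_gt ?c1 //; try lia.
rewrite !face_conn_gt //; try lia.
by rewrite !(face_face (i := j.+1) (j := k)) //; lia.
Qed.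

Lemma face_psi_lt n j k a (x : cell G n.+2) : 1 <= k -> k <= j -> j <= n ->
  face k a (psi j.+1 x) = psi j (face k a x).
Proof.
move=> k_gt0 kj j_le; have [c1 c2] := psi_composable x (ltn0Sn j) j_le.
rewrite !psiE face_comp_lt ?c2 //; try lia.
rewrite face_comp_lt ?c1 //; try lia.
rewrite !face_conn_lt //; try lia.
by rewrite !(face_face (i := k) (j := j.+2)) //; lia.
Qed.

Lemma psi_idem n j (x : cell G n.+2) : 1 <= j -> j <= n.+1 -> psi j (psi j x) = psi j x.
Proof.
move=> j_gt0 j_le; rewrite [LHS]psiE !face_psiS // !conn_degen_eq //; try lia.
by rewrite -!face_psiS // comp_id_l ?comp_id_r //; lia.
Qed.

Lemma face_face_ge n i j a b (x : cell G n.+2) : 1 <= j -> j <= i -> i <= n.+1 ->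
  face i a (face j b x) = face j b (face i.+1 a x).
Proof. by move=> *; rewrite (face_face (i := j) (j := i.+1)) //; lia. Qed.

Lemma comp_degen_l n k (z : cell G n) (y : cell G n.+1) : 1 <= k -> k <= n.+1 ->
  z = face k false y -> comp k (degen k z) y = y.
Proof. by move=> k_gt0 k_le ->; apply: comp_id_l. Qed.

Lemma comp_degen_r n k (z : cell G n) (y : cell G n.+1) : 1 <= k -> k <= n.+1 ->
  z = face k true y -> comp k y (degen k z) = y.
Proof. by move=> k_gt0 k_le ->; apply: comp_id_r. Qed.

Lemma comp_degen2_l n k (z : cell G n) (y : cell G n.+2) : 1 <= k -> k <= n.+1 ->
  degen k z = face k false y -> comp k (degen k.+1 (degen k z)) y = y.
Proof. by move=> k_gt0 k_le e; rewrite -degen_degen // e comp_id_l //; lia. Qed.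

Lemma comp_degen2_r n k (z : cell G n) (y : cell G n.+2) : 1 <= k -> k <= n.+1 ->
  degen k z = face k true y -> comp k y (degen k.+1 (degen k z)) = y.
Proof. by move=> k_gt0 k_le e; rewrite -degen_degen // e comp_id_r //; lia. Qed.

Lemma psi_degenS n j (u : cell G n.+1) : 1 <= j -> j <= n.+1 ->
  psi j (degen j.+1 u) = degen j u.
Proof.
move=> j_gt0 j_le; rewrite psiE !face_degen_eq ?comp_degen_r //; try lia.
  by rewrite conn_cancel2.
by rewrite face_conn_same2.
Qed.

(* [composable] proves equations [face k true x = face k false y] by normalising both sides
  with the cubical identities and the hypotheses in context; nested faces are sorted in
  either order, so that a hypothesis about the innermost face of a cell can fire. *)
Ltac composable := first
  [ cube_simpl; try done;
    do 3 (try match goal with H : face _ _ _ = face _ _ _ |- _ => progress rewrite H end);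
    cube_simpl; done
  | cube_simpl'; try done;
    do 3 (try match goal with H : face _ _ _ = face _ _ _ |- _ => progress rewrite H end);
    cube_simpl'; done ]
with cube_simpl := repeat (first [cube_step | face_face_out]; rewrite ?succnK)
with cube_simpl' := repeat (first [face_face_in | cube_step]; rewrite ?succnK)
with face_face_out :=
  match goal with |- context [face ?i ?a (face ?j ?b ?x)] =>
    rewrite (face_face_ge (i := i) (j := j) a b x); [|lia..] end
with face_face_in :=
  match goal with |- context [face ?i ?a (face ?j ?b ?x)] =>
    rewrite (face_face (i := i) (j := j) a b x); [|lia..] end
with cube_step :=
  match goal with
  | |- context [face ?i ?a (degen ?j ?x)] =>
    first [ rewrite (face_degen_eq (i := j) a x); [|lia..]
          | rewrite (face_degen_lt (i := i) (j := j) a x); [|lia..]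
          | rewrite (face_degen_gt (i := i) (j := j) a x); [|lia..] ]
  | |- context [face ?i ?a (conn ?j ?b ?x)] =>
    first [ rewrite (face_conn_same1 (j := j) a x); [|lia..]
          | rewrite (face_conn_same2 (j := j) a x); [|lia..]
          | rewrite (face_conn_opp1 true (j := j) x); [|lia..]
          | rewrite (face_conn_opp1 false (j := j) x); [|lia..]
          | rewrite (face_conn_opp2 true (j := j) x); [|lia..]
          | rewrite (face_conn_opp2 false (j := j) x); [|lia..]
          | rewrite (face_conn_lt (i := i) (j := j) a b x); [|lia..]
          | rewrite (face_conn_gt (i := i) (j := j) a b x); [|lia..] ]
  | |- context [face ?i ?a (comp ?j ?x ?y)] =>
    first [ rewrite (face_comp_minus (j := j) (x := x) (y := y)); [|lia|lia|composable]
          | rewrite (face_comp_plus (j := j) (x := x) (y := y)); [|lia|lia|composable]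
          | rewrite (face_comp_lt (i := i) (j := j) a (x := x) (y := y)); [|lia..|composable]
          | rewrite (face_comp_gt (i := i) (j := j) a (x := x) (y := y)); [|lia..|composable] ]
  | |- context [face ?i ?a (psi ?j ?x)] =>
    first [ rewrite (face_psiS (j := j) a x); [|lia..]
          | rewrite (face_psi_gt (j := j) (k := i) a x); [|lia..] ]
  | |- context [comp ?k ?y (degen ?k.+1 (degen ?k ?z))] =>
    rewrite (comp_degen2_r (k := k) (z := z) (y := y)); [|lia|lia|composable]
  | |- context [comp ?k (degen ?k.+1 (degen ?k ?z)) ?y] =>
    rewrite (comp_degen2_l (k := k) (z := z) (y := y)); [|lia|lia|composable]
  | |- context [comp ?k ?y (degen ?k ?z)] =>
    rewrite (comp_degen_r (k := k) (z := z) (y := y)); [|lia|lia|composable]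
  | |- context [comp ?k (degen ?k ?z) ?y] =>
    rewrite (comp_degen_l (k := k) (z := z) (y := y)); [|lia|lia|composable]
  | |- context [psi ?j (degen ?j.+1 ?u)] =>
    rewrite (psi_degenS (j := j) u); [|lia..]
  | |- context [conn ?j ?a (degen ?j ?x)] =>
    rewrite (conn_degen_eq (j := j) a x); [|lia..]
  | |- context [conn ?i ?a (degen ?j ?x)] =>
    first [ rewrite (conn_degen_lt (i := i) (j := j) a x); [|lia..]
          | rewrite (conn_degen_gt (i := i) (j := j) a x); [|lia..] ]
  end.

Ltac interchange_at i j := rewrite (interchange (i := i) (j := j));
  [| lia.. | composable | composable | composable | composable].

Lemma psi_comp_gt n j k (x y : cell G n.+2) : 1 <= j -> j.+1 < k -> k <= n.+2 ->
  face k true x = face k false y -> psi j (comp k x y) = comp k (psi j x) (psi j y).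
Proof.
case: k => // k j_gt0 jk k_le xy; rewrite !psiE !face_comp_lt //; try lia; try composable.
rewrite !conn_comp_lt //; try lia; try composable.
by interchange_at k.+1 j.+1; interchange_at k.+1 j.+1.
Qed.

Lemma psi_comp_lt n j k (x y : cell G n.+2) : 1 <= k -> k < j -> j <= n.+1 ->
  face k true x = face k false y -> psi j (comp k x y) = comp k (psi j x) (psi j y).
Proof.
move=> k_gt0 kj j_le xy; rewrite !psiE !face_comp_gt //; try lia; try composable.
rewrite !conn_comp_gt //; try lia; try composable.
by interchange_at k j.+1; interchange_at k j.+1.
Qed.

Lemma psi_conn n i j a (y : cell G n.+1) : 1 <= i -> i < j -> j <= n ->
  psi j.+1 (conn i a y) = conn i a (psi j y).
Proof.
move=> i_gt0 ij j_le; rewrite !psiE !(face_conn_gt (i := j.+2) (j := i)) //; try lia.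
rewrite -!(conn_conn_lt (i := i) (j := j)) //; try lia.
by rewrite !(conn_comp_lt (i := i) (j := j.+1)) //; try lia; composable.
Qed.

Lemma psi_comm n i j (x : cell G n.+2) : 1 <= i -> i < j -> j <= n ->
  psi j.+1 (psi i x) = psi i (psi j.+1 x).
Proof.
move=> i_gt0 ij j_le; rewrite [psi i x]psiE.
rewrite !(psi_comp_lt (j := j.+1) (k := i.+1)) ?psi_conn //; try lia; try composable.
by rewrite -!(face_psi_lt (j := j) (k := i.+1)) //; lia.
Qed.

Lemma conn_true_comp n j (x y : cell G n.+1) : 1 <= j -> j <= n.+1 ->
  face j true x = face j false y ->
  conn j true (comp j x y) = comp j.+1 (conn j true x) (comp j (degen j.+1 x) (conn j true y)).
Proof.
by move=> j_gt0 j_le xy; rewrite conn_comp_plus // comp_degen_r //; try lia; composable.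
Qed.

Lemma conn_false_comp n j (x y : cell G n.+1) : 1 <= j -> j <= n.+1 ->
  face j true x = face j false y ->
  conn j false (comp j x y) = comp j.+1 (comp j (conn j false x) (degen j.+1 y)) (conn j false y).
Proof.
move=> j_gt0 j_le xy; rewrite conn_comp_minus //.
by rewrite (comp_degen_l (k := j) (y := conn j false y)) //; try lia; composable.
Qed.

Lemma psi_connS_conn n j a (q : cell G n.+1) : 1 <= j -> j <= n.+1 ->
  psi j (conn j.+1 a (conn j a q)) = degen j (conn j a q).
Proof.
move=> j_gt0 j_le; rewrite -conn_conn_eq // psiE.
by case: a; cube_simpl; rewrite conn_cancel2 //; lia.
Qed.

Lemma connS_true_conn_false_absorb n j (c : cell G n.+2) : 1 <= j -> j <= n.+1 ->
  let c' := comp j.+1 c (conn j false (face j.+1 true c)) in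
  comp j.+1 (conn j.+1 true c') (conn j false c') =
  comp j.+1 (conn j.+1 true c) (conn j false c).
Proof.
move=> j_gt0 j_le c'; rewrite /c' conn_true_comp //; try lia; try composable.
rewrite (conn_comp_lt (i := j) (j := j.+1)) //; try lia; try composable.
interchange_at j.+2 j.+1.
rewrite comp_assoc //; try lia; try composable.
rewrite (conn_conn_eq (i := j) false) // ?conn_cancel1 //; try lia.
by rewrite -degen_comp_gt //; try lia; composable.
Qed.

Lemma conn_true_connS_false_absorb n j (d : cell G n.+2) : 1 <= j -> j <= n.+1 ->
  let d' := comp j.+1 (conn j true (face j.+1 false d)) d in
  comp j.+1 (conn j true d') (conn j.+1 false d') =
  comp j.+1 (conn j true d) (conn j.+1 false d).
Proof.
move=> j_gt0 j_le d'; rewrite /d' (conn_comp_lt (i := j) (j := j.+1)) //; try lia; try composable.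
rewrite conn_false_comp //; try lia; try composable.
interchange_at j.+2 j.+1.
rewrite -comp_assoc //; try lia; try composable.
rewrite (conn_conn_eq (i := j) true) // ?conn_cancel1 //; try lia.
by rewrite -degen_comp_gt //; try lia; composable.
Qed.

Lemma psi_connS_true_psi n j (c : cell G n.+2) : 1 <= j -> j <= n.+1 ->
  psi j (conn j.+1 true (psi j c)) =
  comp j.+2 (degen j (conn j true (face j.+1 false c))) (psi j (conn j.+1 true c)).
Proof.
move=> j_gt0 j_le; rewrite [psi j c]psiE comp_assoc //; try lia; try composable.
rewrite conn_true_comp //; try lia; try composable.
rewrite psi_comp_gt ?psi_connS_conn //; try lia; try composable.
congr comp; rewrite !psiE; cube_simpl.
rewrite !comp_assoc //; try lia; try composable.
by rewrite connS_true_conn_false_absorb.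
Qed.

Lemma psi_connS_false_psi n j (d : cell G n.+2) : 1 <= j -> j <= n.+1 ->
  psi j (conn j.+1 false (psi j d)) =
  comp j.+2 (psi j (conn j.+1 false d)) (degen j (conn j false (face j.+1 true d))).
Proof.
move=> j_gt0 j_le; rewrite [psi j d]psiE conn_false_comp //; try lia; try composable.
rewrite psi_comp_gt ?psi_connS_conn //; try lia; try composable.
congr comp; rewrite !psiE; cube_simpl.
rewrite -comp_assoc //; try lia; try composable.
by rewrite conn_true_connS_false_absorb.
Qed.

Lemma psi_psiS_psiE n j (x : cell G n.+3) : 1 <= j -> j <= n.+1 ->
  psi j (psi j.+1 (psi j x)) =
  comp j.+2 (comp j.+2 (degen j (conn j true (face j.+1 false (face j.+2 false x))))
                       (psi j (psi j.+1 x)))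
            (degen j (conn j false (face j.+1 true (face j.+2 true x)))).
Proof.
move=> j_gt0 j_le; rewrite [psi j.+1 (psi j x)]psiE !face_psi_gt //; try lia.
(* [psi j (psi j x)] unfolds to a composite in direction [j+1]: no [!psi_comp_gt] here. *)
rewrite psi_comp_gt 1?psi_comp_gt //; try lia; try composable.
rewrite psi_idem ?psi_connS_true_psi ?psi_connS_false_psi //; try lia.
rewrite [psi j.+1 x]psiE psi_comp_gt 1?psi_comp_gt //; try lia; try composable.
rewrite -[LHS]comp_assoc //; try lia; try composable.
by congr comp; rewrite !comp_assoc //; try lia; composable.
Qed.

Lemma psi_psiS_absorb n j (x : cell G n.+3) : 1 <= j -> j <= n.+1 ->
  psi j (psi j.+1 (psi j (psi j.+1 x))) = psi j (psi j.+1 (psi j x)).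
Proof. by move=> j_gt0 j_le; rewrite !psi_psiS_psiE ?psi_idem //; try lia; cube_simpl. Qed.

Lemma folding_idem N j (x : cell G N) : 1 <= j < N -> psi j (psi j x) = psi j x.
Proof. by case: N x => [|[|N]] x hj; [lia | lia | apply: psi_idem; lia]. Qed.

Lemma folding_comm N i j (x : cell G N) : 1 <= i -> i.+1 < j < N ->
  psi j (psi i x) = psi i (psi j x).
Proof.
case: N x => [|[|N]] x i_gt0 hj; try lia.
by case: j hj => [|j] hj; [lia | apply: psi_comm; lia].
Qed.

Lemma folding_absorb N j (x : cell G N) : 1 <= j -> j.+1 < N ->
  psi j (psi j.+1 (psi j (psi j.+1 x))) = psi j (psi j.+1 (psi j x)).
Proof.
by case: N x => [|[|[|N]]] x j_gt0 hj; [lia | lia | lia | apply: psi_psiS_absorb; lia].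
Qed.

End CubicalFolding.

Lemma Psi_chain (G : CubCat) n r (x : cell G n) : Psi r.+1 x = chain (@psi G n) 0 r x.
Proof. by elim: r => [|r IH] //; rewrite /= add0n -IH. Qed.

Lemma Phi_chains (G : CubCat) n m (x : cell G n) : Phi m x = chains (@psi G n) m x.
Proof.
by elim: m x => [|m IH] x //; rewrite -[RHS]/(chains _ m (chain _ 0 m x)) -Psi_chain -IH.
Qed.

Theorem theorem5p4 (G : CubCat) (n m i : nat) :
  m <= n -> 1 <= i -> i <= m - 1 ->
  forall x : cell G n, Phi m (psi i x) = Phi m x.
Proof.
move=> m_le i_gt0 i_lt x; rewrite !Phi_chains.
apply: (chains_f (N := n)) => //.
- exact: folding_idem.
- exact: folding_comm.
- exact: folding_absorb.
- lia.
Qed.
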